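(* Suppose $S_X=S_Y=S$ is a finite nonempty set and $\varphi:S\times S\to\mathbb{R}$ is symmetric, i.e., $\varphi(a,b)=\varphi(b,a)$ for all $a,b\in S$. Then $\varphi\equiv0$ is enforceable if and only if there exists a trivial autocratic strategy or $\max_{\tau_X\in\Delta(S_X)}\min_{\tau_Y\in\Delta(S_Y)}\varphi(\tau_X,\tau_Y)=0$.
   Context: Two players $X,Y$ play a repeated game; $\Delta(S)$ denotes the probability distributions on $S$; $\varphi$ is extended bilinearly to mixed actions, $\varphi(\tau_X,\tau_Y)=\mathbb{E}_{s_X\sim\tau_X,s_Y\sim\tau_Y}[\varphi(s_X,s_Y)]$. Histories: $\mathcal{H}=\bigcup_{T\ge0}(S_X\times S_Y)^T$; behavioral strategies are maps $\sigma:\mathcal{H}\to\Delta(S)$; players independently draw actions each round from their strategies evaluated at the history of realized action pairs, with $\mathbb{E}_{\sigma_X,\sigma_Y}$ the expectation over the resulting play. For $\lambda\in[0,1)$, $\sigma_X$ is $(\varphi,\lambda)$-autocratic if for every behavioral strategy $\sigma_Y$, $\mathbb{E}_{\sigma_X,\sigma_Y}[(1-\lambda)\sum_{t\ge0}\lambda^t\varphi(s_X^t,s_Y^t)]=0$; it is $(\varphi,1)$-autocratic if for every $\sigma_Y$ the limit $\lim_{T\to\infty}\frac1{T+1}\sum_{t=0}^T\mathbb{E}_{\sigma_X,\sigma_Y}[\varphi(s_X^t,s_Y^t)]$ exists and equals $0$. $\varphi\equiv0$ is enforceable if a $(\varphi,\lambda)$-autocratic behavioral strategy exists for some $\lambda\in[0,1]$.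 A trivial autocratic strategy is a mixed action $\tau_X\in\Delta(S_X)$ with $\varphi(\tau_X,s_Y)=0$ for all $s_Y\in S_Y$, played unconditionally in every round. *)

From HB Require Import structures.
From mathcomp Require Import all_boot all_order all_algebra.
From mathcomp Require Import all_classical all_reals all_analysis.
Set Implicit Arguments. Unset Strict Implicit. Unset Printing Implicit Defensive.
Import Order.TTheory GRing.Theory Num.Theory.
Import numFieldNormedType.Exports.
Local Open Scope ring_scope.
Local Open Scope classical_set_scope.

Definition is_mixed (R : realType) (S : finType) (tau : {ffun S -> R}) : Prop :=
  (forall s, 0 <= tau s) /\ \sum_(s : S) tau s = 1.

Definition pure (R : realType) (S : finType) (b : S) : {ffun S -> R} :=
  [ffun s => (s == b)%:R].

Definition phiM (R : realType) (S : finType) (phi : S -> S -> R)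
  (tX tY : {ffun S -> R}) : R :=
  \sum_(a : S) \sum_(b : S) tX a * tY b * phi a b.

(* Histories: sequences of realized action pairs, oldest first. *)
Definition history (S : finType) := seq (S * S)%type.

Definition strategy (R : realType) (S : finType) := history S -> {ffun S -> R}.

Definition is_behavioral (R : realType) (S : finType) (sigma : strategy R S) : Prop :=
  forall h, is_mixed (sigma h).

Fixpoint hist_prob_from (R : realType) (S : finType) (sX sY : strategy R S)
  (pre : history S) (h : history S) : R :=
  match h with
  | [::] => 1
  | x :: h' => sX pre x.1 * sY pre x.2 * hist_prob_from sX sY (rcons pre x) h'
  end.

Definition hist_prob (R : realType) (S : finType) (sX sY : strategy R S)
  (h : history S) : R := hist_prob_from sX sY [::] h.

(* E_{sX,sY}[phi(s_X^t, s_Y^t)]: sum over all histories of length t. *)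
Definition stage_payoff (R : realType) (S : finType) (phi : S -> S -> R)
  (sX sY : strategy R S) (t : nat) : R :=
  \sum_(h : t.-tuple (S * S)%type)
     hist_prob sX sY (tval h) * phiM phi (sX (tval h)) (sY (tval h)).

Definition autocratic (R : realType) (S : finType) (phi : S -> S -> R)
  (lam : R) (sX : strategy R S) : Prop :=
  forall sY : strategy R S, is_behavioral sY ->
    if lam < 1 then
      (fun T : nat => \sum_(0 <= t < T) (1 - lam) * lam ^+ t * stage_payoff phi sX sY t)
        @ \oo --> (0 : R)
    else
      (fun T : nat => (T.+1%:R)^-1 * \sum_(0 <= t < T.+1) stage_payoff phi sX sY t)
        @ \oo --> (0 : R).

Definition enforceable (R : realType) (S : finType) (phi : S -> S -> R) : Prop :=
  exists lam : R, 0 <= lam <= 1 /\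
    exists sX : strategy R S, is_behavioral sX /\ autocratic phi lam sX.

Definition trivial_autocratic_exists (R : realType) (S : finType)
  (phi : S -> S -> R) : Prop :=
  exists tX : {ffun S -> R}, is_mixed tX /\ forall b : S, phiM phi tX (pure R b) = 0.

(* max_{tX} min_{tY} phi(tX,tY), written with sup/inf (both are attained). *)
Definition minval (R : realType) (S : finType) (phi : S -> S -> R)
  (tX : {ffun S -> R}) : R :=
  inf [set phiM phi tX tY | tY in [set tY : {ffun S -> R} | is_mixed tY]].

Definition maxmin (R : realType) (S : finType) (phi : S -> S -> R) : R :=
  sup [set minval phi tX | tX in [set tX : {ffun S -> R} | is_mixed tX]].

(* If Y best-replies to each of X's mixed actions, every stage payoff is at
   most max-min phi, so enforceability forces max-min phi >= 0.  For symmetric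
   phi, Y can instead play constantly a mixed action x with min phi(x, .) > 0,
   and then phi(sigma_X(h), x) = phi(x, sigma_X(h)) >= min phi(x, .) > 0 at
   every history h; hence max-min phi <= 0 as well.
   Conversely, Gordan's theorem of the alternative (proved by induction on the
   number of vectors) shows that max-min phi = 0 yields a mixed action xs with
   phi(xs, .) >= 0 and, using symmetry, a mixed action z with phi(z, .) <= 0;
   a trivial autocratic action serves as both.  X plays xs while the
   accumulated expected payoff is <= 0 and z while it is positive.  That
   accumulated payoff stays bounded, and its expectation after T rounds is the
   sum of the first T stage payoffs, so their Cesaro mean tends to 0. *)

From mathcomp Require Import all_boot all_order all_algebra.
From mathcomp Require Import all_classical all_reals all_analysis.
From mathcomp Require Import ring lra.
Import Order.TTheory GRing.Theory Num.Theory.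
Import numFieldNormedType.Exports.
Set Implicit Arguments. Unset Strict Implicit. Unset Printing Implicit Defensive.
Local Open Scope ring_scope.

Section Gordan.
Variables (R : realFieldType) (S I : finType).
Implicit Types (f : I -> S -> R) (A : {set I}) (d x y p : S -> R) (w : I -> R).

Definition dot d x : R := \sum_a d a * x a.

Definition strictly_feasible f A : Prop :=
  exists x, forall i, i \in A -> 0 < dot (f i) x.

Definition nonneg_dependent f A : Prop :=
  exists w, [/\ forall i, i \in A -> 0 <= w i, exists2 i, i \in A & w i != 0
              & forall a, \sum_(i in A) w i * f i a = 0].

Lemma dot_comb d y p (k m : R) :
  dot d (fun a => k * y a + m * p a) = k * dot d y + m * dot d p.
Proof. by rewrite /dot !mulr_sumr -big_split; apply: eq_bigr => a _ /=; ring. Qed.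

Lemma dot_sum f A w g x :
  (forall a, \sum_(i in A) w i * f i a = g a) ->
  \sum_(i in A) w i * dot (f i) x = dot g x.
Proof.
move=> sum_g; rewrite /dot; under eq_bigr do rewrite mulr_sumr.
rewrite exchange_big; apply: eq_bigr => a _.
by rewrite -sum_g mulr_suml; apply: eq_bigr => i _; rewrite mulrA.
Qed.

Lemma exists_scale_gt (A : {set I}) (q c : I -> R) :
  (forall i, i \in A -> 0 < q i) -> exists K, forall i, i \in A -> c i < K * q i.
Proof.
move=> q_gt0; exists (\sum_(i in A) (`|c i| + 1) / q i) => i iA.
have qi := q_gt0 i iA.
have Ki : (`|c i| + 1) / q i <= \sum_(j in A) (`|c j| + 1) / q j.
  rewrite (big_setD1 i iA) /= lerDl; apply: sumr_ge0 => j /setD1P[_ jA].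
  by rewrite divr_ge0 // ltW ?q_gt0.
apply: (lt_le_trans _ (ler_wpM2r (ltW qi) Ki)).
by rewrite mulfVK ?gt_eqF //; apply: le_lt_trans (ler_norm _) _; rewrite ltrDl.
Qed.

Lemma nonneg_dependent_setD1 f A i0 w c :
  i0 \in A -> 0 <= c -> (forall i, i \in A :\ i0 -> 0 <= w i) ->
  c != 0 \/ (exists2 i, i \in A :\ i0 & w i != 0) ->
  (forall a, c * f i0 a + \sum_(i in A :\ i0) w i * f i a = 0) ->
  nonneg_dependent f A.
Proof.
move=> i0A c_ge0 w_ge0 nz sum0.
exists (fun i => if i == i0 then c else w i); split.
- move=> i iA; case: eqP => [//|/eqP ne].
  by apply: w_ge0; rewrite in_setD1 ne.
- case: nz => [cn0|[i /setD1P[ne iA] wi]]; first by exists i0; rewrite ?eqxx.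
  by exists i; rewrite // (negbTE ne).
- move=> a; rewrite (big_setD1 i0 i0A) eqxx -[RHS](sum0 a); congr (_ + _).
  by apply: eq_bigr => i /setD1P[/negbTE -> _].
Qed.

Section Projection.
Variables (f : I -> S -> R) (A : {set I}) (i0 : I) (p : S -> R).

(* When [dot (f i0) p = 1], [f'] projects the family along [f i0] onto the
   hyperplane [dot _ p = 0]. *)
Let f' i a := f i a - dot (f i) p * f i0 a.

Lemma strictly_feasible_project :
  dot (f i0) p = 1 -> strictly_feasible f' (A :\ i0) -> strictly_feasible f A.
Proof.
move=> fp1 [y y_gt0].
have [K HK] := exists_scale_gt (fun i => - dot (f i) p) y_gt0.
(* [dot (f i0) x = 1] and [dot (f i) x = K * dot (f' i) y + dot (f i) p]. *)
exists (fun a => K * y a + (1 - K * dot (f i0) y) * p a) => i iA.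
rewrite dot_comb; case: (eqVneq i i0) => [->|ne]; first by rewrite fp1; lra.
have iA' : i \in A :\ i0 by rewrite in_setD1 ne.
have f'y : dot (f' i) y = dot (f i) y - dot (f i) p * dot (f i0) y.
  rewrite /f'; set c := dot (f i) p; rewrite /dot mulr_sumr -sumrB.
  by apply: eq_bigr => a _ /=; ring.
have := HK i iA'; rewrite f'y; nra.
Qed.

Lemma nonneg_dependent_project x0 : i0 \in A ->
  (forall i, i \in A :\ i0 -> 0 < dot (f i) x0) -> dot (f i0) x0 <= 0 ->
  nonneg_dependent f' (A :\ i0) -> nonneg_dependent f A.
Proof.
move=> i0A x0_gt0 fx0_le0 [w [w_ge0 [j jA wj] sum0]].
set mu := \sum_(i in A :\ i0) w i * dot (f i) p.
have sum_mu a : \sum_(i in A :\ i0) w i * f i a = mu * f i0 a.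
  have : \sum_(i in A :\ i0) w i * f' i a = \sum_(i in A :\ i0) w i * f i a - mu * f i0 a.
    by rewrite /mu mulr_suml -sumrB; apply: eq_bigr => i _ /=; rewrite /f'; ring.
  by rewrite sum0 => /esym/eqP; rewrite subr_eq0 => /eqP.
have [mu_le0|mu_gt0] := lerP mu 0.
  apply: (@nonneg_dependent_setD1 f A i0 w (- mu)) => //.
  - by rewrite oppr_ge0.
  - by right; exists j.
  - by move=> a; rewrite sum_mu mulNr addNr.
have w_dot_ge0 i : i \in A :\ i0 -> 0 <= w i * dot (f i) x0.
  by move=> iA; rewrite mulr_ge0 ?w_ge0 ?ltW ?x0_gt0.
have : 0 < \sum_(i in A :\ i0) w i * dot (f i) x0.
  rewrite (big_setD1 j jA) /= ltr_pwDl ?mulr_gt0 ?x0_gt0 //.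
    by rewrite lt_def wj w_ge0.
  by apply: sumr_ge0 => i /setD1P[_]; exact: w_dot_ge0.
rewrite (dot_sum _ sum_mu) /dot; under eq_bigr do rewrite -mulrA.
by rewrite -mulr_sumr ltNge mulr_ge0_le0 // ltW.
Qed.

End Projection.

Theorem gordan f A : strictly_feasible f A \/ nonneg_dependent f A.
Proof.
move: {2}#|A| (erefl #|A|) => n; elim: n f A => [|n IH] f A cardA.
  by left; exists (fun=> 0) => i; rewrite (cards0_eq cardA) inE.
have [i0 i0A] : exists i0, i0 \in A by apply/card_gt0P; rewrite cardA.
have cardA' : #|A :\ i0| = n.
  by move: cardA; rewrite (cardsD1 i0) i0A add1n => -[].
have [[x0 x0_gt0]|[w [w_ge0 w_nz sum0]]] := IH f _ cardA'; last first.
  right; apply: (@nonneg_dependent_setD1 f A i0 w 0) => //; first by right.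
  by move=> a; rewrite mul0r add0r.
have [fx0_gt0|fx0_le0] := ltP 0 (dot (f i0) x0).
  left; exists x0 => i iA; case: (eqVneq i i0) => [->//|ne].
  by apply: x0_gt0; rewrite in_setD1 ne.
have [f0|/forallPn[a0 fa0]] := boolP [forall a, f i0 a == 0].
  right; apply: (@nonneg_dependent_setD1 f A i0 (fun=> 0) 1) => //.
  - by left; rewrite oner_neq0.
  - by move=> a; rewrite (eqP (forallP f0 a)) mulr0 add0r big1 // => i _; rewrite mul0r.
pose p a := (a == a0)%:R / f i0 a0.
have fp1 : dot (f i0) p = 1.
  rewrite /dot (bigD1 a0) //= big1 => [|a /negbTE ne]; last by rewrite /p ne mul0r mulr0.
  by rewrite /p eqxx mul1r addr0 mulfV.
have [feas|dep] := IH (fun i a => f i a - dot (f i) p * f i0 a) _ cardA'.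
  by left; exact: strictly_feasible_project fp1 feas.
by right; exact: nonneg_dependent_project i0A x0_gt0 fx0_le0 dep.
Qed.

End Gordan.

Section MixedActions.
Variables (R : realType) (S : finType).
Implicit Types (phi psi : S -> S -> R) (x y : {ffun S -> R}) (a b : S).

Lemma phiM_pure_r phi x b : phiM phi x (pure R b) = \sum_a x a * phi a b.
Proof.
apply: eq_bigr => a _; rewrite (bigD1 b) //= big1 => [|c /negbTE cb].
  by rewrite /pure ffunE eqxx mulr1 addr0.
by rewrite /pure ffunE cb mulr0 mul0r.
Qed.

Lemma phiM_pure_l phi a y : phiM phi (pure R a) y = \sum_b y b * phi a b.
Proof.
rewrite /phiM (bigD1 a) //= [X in _ + X]big1 ?addr0 => [|c /negbTE ca].
  by apply: eq_bigr => b _; rewrite /pure ffunE eqxx mul1r.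
by apply: big1 => b _; rewrite /pure ffunE ca !mul0r.
Qed.

Lemma phiM_sum_pure_r phi x y : phiM phi x y = \sum_b y b * phiM phi x (pure R b).
Proof.
rewrite {1}/phiM exchange_big; apply: eq_bigr => b _ /=.
by rewrite phiM_pure_r mulr_sumr; apply: eq_bigr => a _ /=; ring.
Qed.

Lemma phiM_sym phi x y :
  (forall a b, phi a b = phi b a) -> phiM phi x y = phiM phi y x.
Proof.
move=> phi_sym; rewrite /phiM exchange_big; apply: eq_bigr => b _.
by apply: eq_bigr => a _; rewrite phi_sym /=; ring.
Qed.

Lemma phiM_opp_tr phi x y : phiM (fun a b => - phi b a) x y = - phiM phi y x.
Proof.
rewrite /phiM exchange_big -sumrN; apply: eq_bigr => b _.
by rewrite -sumrN; apply: eq_bigr => a _ /=; ring.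
Qed.

Lemma pure_mixed b : is_mixed (pure R b).
Proof.
split=> [a|]; first by rewrite /pure ffunE ler0n.
rewrite (bigD1 b) //= big1 => [|c /negbTE cb]; first by rewrite /pure ffunE eqxx addr0.
by rewrite /pure ffunE cb.
Qed.

Lemma mixed_le1 x a : is_mixed x -> x a <= 1.
Proof.
by case=> x_ge0 <-; rewrite (bigD1 a) //= lerDl sumr_ge0.
Qed.

Definition payoff_bound phi : R := \sum_a \sum_b `|phi a b|.

Lemma payoff_bound_ge0 phi : 0 <= payoff_bound phi.
Proof. by do 2![apply: sumr_ge0 => ? _]. Qed.

Lemma phiM_bound phi x y :
  is_mixed x -> is_mixed y -> `|phiM phi x y| <= payoff_bound phi.
Proof.
move=> mx my; apply: (le_trans (ler_norm_sum _ _ _)); apply: ler_sum => a _.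
apply: (le_trans (ler_norm_sum _ _ _)); apply: ler_sum => b _.
rewrite !normrM (ger0_norm (mx.1 a)) (ger0_norm (my.1 b)) ler_piMl //.
by rewrite mulr_ile1 ?mixed_le1 ?mx.1 ?my.1.
Qed.

Lemma phiM_ge_pure phi x y c :
  is_mixed y -> (forall b, c <= phiM phi x (pure R b)) -> c <= phiM phi x y.
Proof.
case=> y_ge0 y_sum1 c_le; rewrite phiM_sum_pure_r -[c]mul1r -y_sum1 mulr_suml.
by apply: ler_sum => b _; rewrite ler_wpM2l.
Qed.

Lemma sum_pair_mixed x y (g : S -> R) :
  is_mixed x -> \sum_(p : S * S) x p.1 * y p.2 * g p.2 = \sum_b y b * g b.
Proof.
case=> _ x_sum1; rewrite -(pair_bigA _ (fun a b => x a * y b * g b)) /=.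
rewrite -[RHS]mul1r -x_sum1 mulr_suml.
by apply: eq_bigr => a _; rewrite mulr_sumr; apply: eq_bigr => b _; rewrite mulrA.
Qed.

Definition normalize (x : S -> R) : {ffun S -> R} := [ffun a => x a / \sum_b x b].

Lemma normalize_mixed (x : S -> R) :
  (forall a, 0 <= x a) -> \sum_a x a != 0 -> is_mixed (normalize x).
Proof.
move=> x_ge0 sum_neq0; split=> [a|].
  by rewrite ffunE divr_ge0 ?sumr_ge0.
by under eq_bigr do rewrite ffunE; rewrite -mulr_suml mulfV.
Qed.

Lemma sum_normalize (x g : S -> R) :
  \sum_a normalize x a * g a = (\sum_a x a * g a) / \sum_a x a.
Proof.
by rewrite mulr_suml; apply: eq_bigr => a _; rewrite ffunE mulrAC.
Qed.

Lemma mixed_alternative psi (b0 : S) :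
  (exists2 x, is_mixed x & forall b, 0 < phiM psi x (pure R b)) \/
  (exists2 y, is_mixed y & forall a, phiM psi (pure R a) y <= 0).
Proof.
(* The columns of [psi] together with the coordinate vectors: a strictly
   feasible [x] is positive, and a dependency yields weights on the columns. *)
pose f (i : S + S) : S -> R :=
  match i with inl b => fun a => psi a b | inr a' => fun a => (a == a')%:R end.
have [[x x_gt0]|[w [w_ge0 [j _ wj] sum0]]] := gordan f [set: S + S].
  have x_pos a : 0 < x a.
    have := x_gt0 (inr a) (finset.in_setT _).
    rewrite /dot (bigD1 a) //= big1 => [|c /negbTE ca]; last by rewrite ca mul0r.
    by rewrite eqxx mul1r addr0.
  have sum_x_gt0 : 0 < \sum_a x a.
    by rewrite (bigD1 b0) //= ltr_pwDl ?sumr_ge0 // => a _; exact: ltW.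
  left; exists (normalize x) => [|b].
    by apply: normalize_mixed; [move=> a; exact: ltW | rewrite gt_eqF].
  rewrite phiM_pure_r sum_normalize divr_gt0 //.
  by have := x_gt0 (inl b) (finset.in_setT _); rewrite /dot; under eq_bigr do rewrite mulrC.
pose wl b := w (inl b).
have wl_ge0 b : 0 <= wl b by apply: w_ge0; rewrite finset.in_setT.
have sum_wl a : \sum_b wl b * psi a b = - w (inr a).
  have sum_inr : \sum_(c | inr c \in [set: S + S]) w (inr c) * (a == c)%:R = w (inr a).
    rewrite (bigD1 a) ?finset.in_setT //= eqxx mulr1 big1 ?addr0 // => c /andP[_ ca].
    by rewrite eq_sym (negbTE ca) mulr0.
  have := sum0 a; rewrite big_sumType /= sum_inr (eq_bigl xpredT) => [|b]; last first.
    by rewrite finset.in_setT.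
  by move/eqP; rewrite addr_eq0 => /eqP.
have sum_wl_neq0 : \sum_b wl b != 0.
  apply/negP => /eqP /(psumr_eq0P (fun b _ => wl_ge0 b)) wl0.
  move: wj; case: j => [b|a]; first by rewrite -/(wl b) wl0 ?eqxx.
  by rewrite -oppr_eq0 -sum_wl big1 ?eqxx // => b _; rewrite wl0 ?mul0r.
right; exists (normalize wl) => [|a]; first exact: normalize_mixed.
rewrite phiM_pure_l sum_normalize sum_wl mulNr oppr_le0 divr_ge0 ?sumr_ge0 //.
by apply: w_ge0; rewrite finset.in_setT.
Qed.

End MixedActions.

Section Value.
Variables (R : realType) (S : finType) (b0 : S) (phi : S -> S -> R).
Implicit Types (x y : {ffun S -> R}).
Local Open Scope classical_set_scope.

Lemma minval_le_phiM x y : is_mixed x -> is_mixed y -> minval phi x <= phiM phi x y.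
Proof.
move=> mx my; apply: ge_inf; last by exists y.
exists (- payoff_bound phi) => _ [y' my' <-].
by rewrite lerNl; apply: le_trans (phiM_bound phi mx my'); rewrite -normrN ler_norm.
Qed.

Lemma le_minval x c : (forall y, is_mixed y -> c <= phiM phi x y) -> c <= minval phi x.
Proof.
move=> le_c; apply: lb_le_inf => [|_ [y my <-]]; last exact: le_c.
by exists (phiM phi x (pure R b0)), (pure R b0); first exact: pure_mixed.
Qed.

Definition best_reply x : S := Order.arg_min b0 xpredT (fun b => phiM phi x (pure R b)).

Lemma minval_best_reply x :
  is_mixed x -> minval phi x = phiM phi x (pure R (best_reply x)).
Proof.
move=> mx; apply/eqP; rewrite eq_le (minval_le_phiM mx (pure_mixed R _)) /=.
apply: le_minval => y my; apply: phiM_ge_pure => // b.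
by rewrite /best_reply; case: arg_minP => // b' _; apply.
Qed.

Lemma minval_gt0 x :
  is_mixed x -> (forall b, 0 < phiM phi x (pure R b)) -> 0 < minval phi x.
Proof. by move=> mx pos; rewrite minval_best_reply. Qed.

Lemma minval_le_maxmin x : is_mixed x -> minval phi x <= maxmin phi.
Proof.
move=> mx; apply: ub_le_sup; last by exists x.
exists (payoff_bound phi) => _ [x' mx' <-].
apply: le_trans (minval_le_phiM mx' (pure_mixed R b0)) _.
exact: le_trans (ler_norm _) (phiM_bound _ mx' (pure_mixed R b0)).
Qed.

Lemma maxmin_le c : (forall x, is_mixed x -> minval phi x <= c) -> maxmin phi <= c.
Proof.
move=> le_c; apply: ge_sup => [|_ [x mx <-]]; last exact: le_c.
by exists (minval phi (pure R b0)), (pure R b0); first exact: pure_mixed.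
Qed.

Lemma maxmin_gt c : c < maxmin phi -> exists2 x, is_mixed x & c < minval phi x.
Proof.
move=> c_lt; have [|_ [x mx <-] lt_c] := sup_gt _ c_lt; last by exists x.
by exists (minval phi (pure R b0)), (pure R b0); first exact: pure_mixed.
Qed.

End Value.

Section Guarantees.
Variables (R : realType) (S : finType) (b0 : S) (phi : S -> S -> R).

Lemma maxmin_ge0_guarantee :
  0 <= maxmin phi -> exists2 x, is_mixed x & forall b, 0 <= phiM phi x (pure R b).
Proof.
move=> maxmin_ge0; pose psi a b := - phi b a.
have [[y my neg]|[x mx nonneg]] := mixed_alternative psi b0.
  have : maxmin phi <= - minval psi y.
    apply: (maxmin_le b0) => x mx; apply: le_trans (minval_le_phiM _ mx my) _.
    by rewrite lerNr -phiM_opp_tr; apply: minval_le_phiM.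
  have := minval_gt0 b0 my neg; lra.
by exists x => // b; have := nonneg b; rewrite phiM_opp_tr oppr_le0.
Qed.

Lemma maxmin_le0_guarantee : (forall a b, phi a b = phi b a) ->
  maxmin phi <= 0 -> exists2 z, is_mixed z & forall b, phiM phi z (pure R b) <= 0.
Proof.
move=> phi_sym maxmin_le0.
have [[x mx pos]|[z mz nonpos]] := mixed_alternative phi b0.
  have := minval_le_maxmin b0 phi mx; have := minval_gt0 b0 mx pos; lra.
by exists z => // b; rewrite phiM_sym.
Qed.

End Guarantees.

Lemma sum_tuple_rcons (V : nmodType) (T : finType) n (F : seq T -> V) :
  \sum_(h : n.+1.-tuple T) F h = \sum_(h : n.-tuple T) \sum_(x : T) F (rcons h x).
Proof.
pose split_last (h : n.+1.-tuple T) :=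
  ([tuple of belast (thead h) (behead h)], last (thead h) (behead h)).
have rcons_split h : rcons (split_last h).1 (split_last h).2 = h.
  by rewrite /= -lastI [in RHS](tuple_eta h).
rewrite pair_bigA (reindex (fun p : n.-tuple T * T => [tuple of rcons p.1 p.2])) //=.
exists split_last => [[h x] _ | h _]; last by apply: val_inj; rewrite /= rcons_split.
have /rcons_inj[eh ex] := rcons_split [tuple of rcons h x].
by congr pair => //; apply: val_inj.
Qed.

Section Play.
Variables (R : realType) (S : finType) (sX sY : strategy R S).
Implicit Types (h pre : history S) (F G : history S -> R).

Lemma hist_prob_from_rcons pre h x :
  hist_prob_from sX sY pre (rcons h x) =
  hist_prob_from sX sY pre h * (sX (pre ++ h) x.1 * sY (pre ++ h) x.2).
Proof.
elim: h pre => [|y h IH] pre /=; first by rewrite cats0 mul1r mulr1.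
by rewrite IH -cat_rcons mulrA.
Qed.

Lemma hist_prob_rcons h x :
  hist_prob sX sY (rcons h x) = hist_prob sX sY h * (sX h x.1 * sY h x.2).
Proof. exact: hist_prob_from_rcons. Qed.

Definition hist_expect t F : R :=
  \sum_(h : t.-tuple (S * S)) hist_prob sX sY h * F h.

Lemma stage_payoffE phi t :
  stage_payoff phi sX sY t = hist_expect t (fun h => phiM phi (sX h) (sY h)).
Proof. by []. Qed.

Lemma hist_expectD t F G :
  hist_expect t (fun h => F h + G h) = hist_expect t F + hist_expect t G.
Proof. by rewrite /hist_expect -big_split; apply: eq_bigr => h _; rewrite mulrDr. Qed.

Lemma hist_expect_rcons t F :
  hist_expect t.+1 F =
  hist_expect t (fun h => \sum_(p : S * S) sX h p.1 * sY h p.2 * F (rcons h p)).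
Proof.
rewrite /hist_expect (sum_tuple_rcons _ (fun h => hist_prob sX sY h * F h)).
apply: eq_bigr => h _; rewrite mulr_sumr; apply: eq_bigr => p _.
by rewrite hist_prob_rcons !mulrA.
Qed.

Hypotheses (bX : is_behavioral sX) (bY : is_behavioral sY).

Lemma hist_prob_ge0 h : 0 <= hist_prob sX sY h.
Proof.
elim/last_ind: h => [|h p IH]; first exact: ler01.
by rewrite hist_prob_rcons !mulr_ge0 ?(bX h).1 ?(bY h).1.
Qed.

Lemma hist_expect_cst t c : hist_expect t (fun=> c) = c.
Proof.
elim: t => [|t IH].
  rewrite /hist_expect (eq_bigr (fun=> c)) => [|h _]; last by rewrite tuple0 mul1r.
  by rewrite sumr_const card_tuple.
rewrite hist_expect_rcons -[RHS]IH; apply: eq_bigr => h _; congr (_ * _).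
by rewrite (sum_pair_mixed _ (fun=> c) (bX h)) -mulr_suml (bY h).2 mul1r.
Qed.

Lemma ler_hist_expect t F G :
  (forall h, F h <= G h) -> hist_expect t F <= hist_expect t G.
Proof. by move=> FG; apply: ler_sum => h _; rewrite ler_wpM2l ?hist_prob_ge0. Qed.

Lemma stage_payoff_ge phi c t :
  (forall h, c <= phiM phi (sX h) (sY h)) -> c <= stage_payoff phi sX sY t.
Proof. by move=> le_c; rewrite stage_payoffE -(hist_expect_cst t c) ler_hist_expect. Qed.

Lemma stage_payoff_le phi c t :
  (forall h, phiM phi (sX h) (sY h) <= c) -> stage_payoff phi sX sY t <= c.
Proof. by move=> le_c; rewrite stage_payoffE -(hist_expect_cst t c) ler_hist_expect. Qed.

Lemma hist_expect_norm_le t F (c : R) :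
  (forall h, `|F h| <= c) -> `|hist_expect t F| <= c.
Proof.
move=> F_le; have F_bounds h : - c <= F h <= c by rewrite -ler_norml.
rewrite ler_norml; apply/andP; split.
  rewrite -[X in X <= _](hist_expect_cst t (- c)); apply: ler_hist_expect => h.
  by case/andP: (F_bounds h).
rewrite -[X in _ <= X](hist_expect_cst t c); apply: ler_hist_expect => h.
by case/andP: (F_bounds h).
Qed.

End Play.

Section Vanishing.
Variable R : realType.
Local Open Scope classical_set_scope.
Implicit Types (lam c : R) (g : nat -> R).

(* [autocratic phi lam sX] unfolds to
   [forall sY, is_behavioral sY -> payoff_vanishes lam (stage_payoff phi sX sY)]. *)
Definition payoff_vanishes lam g : Prop :=
  if lam < 1 then
    (fun T : nat => \sum_(0 <= t < T) (1 - lam) * lam ^+ t * g t) @ \oo --> (0 : R)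
  else
    (fun T : nat => (T.+1%:R)^-1 * \sum_(0 <= t < T.+1) g t) @ \oo --> (0 : R).

Lemma payoff_vanishesN lam g :
  payoff_vanishes lam g -> payoff_vanishes lam (fun t => - g t).
Proof.
rewrite /payoff_vanishes; case: ifP => _ /cvgN; rewrite oppr0 => vanish.
all: apply: (cvg_trans _ vanish); apply: near_eq_cvg; apply: nearW => T; rewrite fctE.
  by rewrite -sumrN; apply: eq_bigr => t _; rewrite mulrN.
by rewrite sumrN mulrN.
Qed.

Lemma discounted_sum_ge lam c g T : 0 <= lam <= 1 -> (forall t, c <= g t) ->
  c * (1 - lam ^+ T) <= \sum_(0 <= t < T) (1 - lam) * lam ^+ t * g t.
Proof.
move=> /andP[lam_ge0 lam_le1] c_le.
have geom : (1 - lam) * \sum_(0 <= t < T) lam ^+ t = 1 - lam ^+ T.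
  by rewrite big_mkord -[RHS]opprB subrX1 -mulNr opprB.
rewrite -geom mulrC mulr_sumr mulr_suml; apply: ler_sum => t _.
by rewrite ler_wpM2l // mulr_ge0 ?exprn_ge0 // subr_ge0.
Qed.

Lemma cesaro_mean_ge c g T :
  (forall t, c <= g t) -> c <= (T.+1%:R)^-1 * \sum_(0 <= t < T.+1) g t.
Proof.
move=> c_le; rewrite ler_pdivlMl ?ltr0Sn // mulr_natl -[X in _ *+ X]subn0.
by rewrite -sumr_const_nat; apply: ler_sum.
Qed.

Lemma not_payoff_vanishes lam c g : 0 <= lam <= 1 -> 0 < c ->
  (forall t, c <= g t) -> ~ payoff_vanishes lam g.
Proof.
move=> lam01 c_gt0 c_le; rewrite /payoff_vanishes; case: ifPn => [lam_lt1|_] vanish.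
  have cvg_c : (fun T : nat => c * (1 - lam ^+ T)) @ \oo --> c.
    rewrite -[X in _ --> X]mulr1 -[X in c * X]subr0.
    apply: cvgMl_tmp; apply: cvgB; first exact: cvg_cst.
    by apply: cvg_expr; case/andP: lam01 => lam_ge0 _; rewrite ger0_norm.
  have : c <= 0.
    by apply: (ler_cvg_to cvg_c vanish); apply: nearW => T; exact: discounted_sum_ge.
  by rewrite leNgt c_gt0.
have : c <= 0.
  by apply: (ler_cvg_to (cvg_cst c) vanish); apply: nearW => T; exact: cesaro_mean_ge.
by rewrite leNgt c_gt0.
Qed.

End Vanishing.

Section Necessity.
Variables (R : realType) (S : finType) (b0 : S) (phi : S -> S -> R).

Lemma enforceable_maxmin_ge0 : enforceable phi -> 0 <= maxmin phi.
Proof.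
move=> [lam [lam01 [sX [bX autX]]]]; rewrite leNgt; apply/negP => maxmin_lt0.
pose sY h := pure R (best_reply b0 phi (sX h)).
have bY : is_behavioral sY by move=> h; exact: pure_mixed.
apply: (not_payoff_vanishes (c := - maxmin phi) lam01) (payoff_vanishesN (autX sY bY)).
  by rewrite oppr_gt0.
move=> t; rewrite lerN2; apply: stage_payoff_le => // h.
by rewrite -minval_best_reply ?bX //; apply: minval_le_maxmin.
Qed.

Lemma enforceable_maxmin_le0 :
  (forall a b, phi a b = phi b a) -> enforceable phi -> maxmin phi <= 0.
Proof.
move=> phi_sym [lam [lam01 [sX [bX autX]]]]; rewrite leNgt; apply/negP => maxmin_gt0.
have [y my minval_gt0] := maxmin_gt b0 maxmin_gt0.
have bY : is_behavioral (fun=> y) by [].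
apply: (not_payoff_vanishes lam01 minval_gt0) (autX _ bY) => t.
by apply: stage_payoff_ge => // h; rewrite phiM_sym //; apply: minval_le_phiM.
Qed.

End Necessity.

Section Balancing.
Variables (R : realType) (S : finType) (phi : S -> S -> R) (xs z : {ffun S -> R}).
Hypotheses (mxs : is_mixed xs) (mz : is_mixed z)
           (xs_ge0 : forall b, 0 <= phiM phi xs (pure R b))
           (z_le0 : forall b, phiM phi z (pure R b) <= 0).
Local Open Scope classical_set_scope.

Definition balancing_action (d : R) : {ffun S -> R} := if d <= 0 then xs else z.

Definition balance (h : history S) : R :=
  foldl (fun d p => d + phiM phi (balancing_action d) (pure R p.2)) 0 h.

Definition balancing_strategy : strategy R S := fun h => balancing_action (balance h).

Lemma balance_rcons h p :
  balance (rcons h p) = balance h + phiM phi (balancing_strategy h) (pure R p.2).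
Proof. exact: foldl_rcons. Qed.

Lemma balancing_behavioral : is_behavioral balancing_strategy.
Proof. by move=> h; rewrite /balancing_strategy /balancing_action; case: ifP. Qed.

Lemma balance_bound h : `|balance h| <= payoff_bound phi.
Proof.
elim/last_ind: h => [|h p IH]; first by rewrite normr0 payoff_bound_ge0.
rewrite balance_rcons /balancing_strategy /balancing_action.
move: IH; rewrite !ler_norml => /andP[lb ub].
case: ifPn => [d_le0|]; last rewrite -ltNge => d_gt0.
  have := xs_ge0 p.2; have := phiM_bound phi mxs (pure_mixed R p.2).
  rewrite ler_norml => /andP[_ v_le] v_ge0; apply/andP; split; lra.
have := z_le0 p.2; have := phiM_bound phi mz (pure_mixed R p.2).
rewrite ler_norml => /andP[v_ge _] v_le0; apply/andP; split; lra.
Qed.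

Lemma hist_expect_balance sY t : is_behavioral sY ->
  hist_expect balancing_strategy sY t balance =
  \sum_(0 <= i < t) stage_payoff phi balancing_strategy sY i.
Proof.
move=> bY; elim: t => [|t IH].
  by rewrite big_geq // /hist_expect big1 // => h _; rewrite tuple0 mulr0.
rewrite big_nat_recr //= -IH stage_payoffE -hist_expectD hist_expect_rcons.
apply: eq_bigr => h _; congr (_ * _).
under eq_bigr do rewrite balance_rcons mulrDr.
have mX := balancing_behavioral h.
rewrite big_split /= (sum_pair_mixed (sY h) (fun=> balance h) mX).
rewrite (sum_pair_mixed (sY h) (fun b => phiM phi (balancing_strategy h) (pure R b)) mX).
by rewrite -mulr_suml (bY h).2 mul1r -phiM_sum_pure_r.
Qed.

Lemma balancing_autocratic : autocratic phi 1 balancing_strategy.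
Proof.
move=> sY bY; rewrite ltxx.
set M := payoff_bound phi.
have mean_le T :
    `|(T.+1%:R)^-1 * \sum_(0 <= t < T.+1) stage_payoff phi balancing_strategy sY t|
    <= M * (T.+1%:R)^-1.
  rewrite -hist_expect_balance // normrM [X in X * _]ger0_norm ?invr_ge0 // mulrC.
  apply: ler_wpM2r; first by rewrite invr_ge0.
  by apply: hist_expect_norm_le => //; [exact: balancing_behavioral | exact: balance_bound].
apply: (squeeze_cvgr (f := fun T : nat => - (M * (T.+1%:R)^-1))
                     (h := fun T : nat => M * (T.+1%:R)^-1)).
- by apply: nearW => T; rewrite -ler_norml.
- by rewrite -oppr0; apply: cvgN; rewrite -(mulr0 M); apply: cvgMl_tmp; exact: cvg_harmonic.
- by rewrite -(mulr0 M); apply: cvgMl_tmp; exact: cvg_harmonic.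
Qed.

Lemma guarantees_enforceable : enforceable phi.
Proof.
exists 1; split; first by rewrite ler01 lexx.
exists balancing_strategy; split; first exact: balancing_behavioral.
exact: balancing_autocratic.
Qed.

End Balancing.

Unset Implicit Arguments.

Theorem proposition12 (R : realType) (S : finType) (phi : S -> S -> R)
  (HS : (0 < #|S|)%N) (Hsym : forall a b : S, phi a b = phi b a) :
  enforceable phi <-> (trivial_autocratic_exists phi \/ maxmin phi = 0).
Proof.
have [b0 _] := card_gt0P HS.
split=> [enf | [[tau [mtau tau0]] | maxmin0]].
- right; apply/eqP; rewrite eq_le.
  by rewrite (enforceable_maxmin_le0 b0) ?(enforceable_maxmin_ge0 b0).
- by apply: (guarantees_enforceable mtau mtau) => b; rewrite tau0.
- have maxmin_ge0 : 0 <= maxmin phi by rewrite maxmin0.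
  have maxmin_le0 : maxmin phi <= 0 by rewrite maxmin0.
  have [xs mxs xs_ge0] := maxmin_ge0_guarantee b0 maxmin_ge0.
  have [z mz z_le0] := maxmin_le0_guarantee b0 Hsym maxmin_le0.
  exact: guarantees_enforceable mxs mz xs_ge0 z_le0.
Qed.
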